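(* Even for two teams and nonnegative-value players who all strictly prefer the same team, there may not exist an allocation that is both EF1 and justified envy-free.
   Context: Setting: teams $T=[n]$, players $P=\{p_1,\dots,p_m\}$. Each player $p$ has a complete, transitive weak preference $\succsim_p$ over $T$ (strict part $\succ_p$). Each team $i$ has an additive valuation $v_i$, $v_i(S)=\sum_{p\in S}v_i(p)$; nonnegative-value players means $v_i(p)\ge0$ for all $i,p$. An allocation is an ordered partition $(A_1,\dots,A_n)$ of $P$. $A$ is EF1 if for all distinct $i,j$ there are $X\subseteq A_i$, $Y\subseteq A_j$ with $|X\cup Y|\le1$ and $v_i(A_i\setminus X)\ge v_i(A_j\setminus Y)$. Given $A$, a player $p\in A_i$ has justified envy toward a player $q\in A_j$ if $j\succ_p i$ and $v_j(p)>v_j(q)$. $A$ is justified envy-free (justified EF) if no player has justified envy toward another player. *)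

From HB Require Import structures.
From mathcomp Require Import all_boot all_order all_algebra.
Set Implicit Arguments. Unset Strict Implicit. Unset Printing Implicit Defensive.
Import Order.TTheory GRing.Theory Num.Theory.
Local Open Scope ring_scope.

(* Teams are 'I_n, players form a finite type P.
   pref p : rel 'I_n is the weak preference of player p: pref p i j means i ≿_p j.
   v i p is the value of player p for team i.
   An allocation (ordered partition of P into n bundles) is a map A : P -> 'I_n;
   the bundle of team i is [set p | A p == i]. *)

Definition weak_pref (n : nat) (P : finType) (pref : P -> rel 'I_n) : Prop :=
  forall p, total (pref p) /\ transitive (pref p).

Definition strict_pref (n : nat) (P : finType) (pref : P -> rel 'I_n)
  (p : P) (i j : 'I_n) : bool := pref p i j && ~~ pref p j i.

Definition bundle (n : nat) (P : finType) (A : P -> 'I_n) (i : 'I_n) : {set P} :=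
  [set p | A p == i].

Definition valuation (R : numDomainType) (n : nat) (P : finType)
  (v : 'I_n -> P -> R) (i : 'I_n) (S : {set P}) : R :=
  \sum_(p in S) v i p.

Definition nonneg_values (R : numDomainType) (n : nat) (P : finType)
  (v : 'I_n -> P -> R) : Prop := forall i p, 0 <= v i p.

Definition EF1 (R : numDomainType) (n : nat) (P : finType)
  (v : 'I_n -> P -> R) (A : P -> 'I_n) : Prop :=
  forall i j : 'I_n, i != j ->
    exists X Y : {set P},
      [/\ X \subset bundle A i, Y \subset bundle A j, (#|X :|: Y| <= 1)%N &
          valuation v i (bundle A j :\: Y) <= valuation v i (bundle A i :\: X)].

Definition justified_envy (R : numDomainType) (n : nat) (P : finType)
  (pref : P -> rel 'I_n) (v : 'I_n -> P -> R) (A : P -> 'I_n) (p q : P) : Prop :=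
  strict_pref pref p (A q) (A p) /\ v (A q) q < v (A q) p.

Definition justified_EF (R : numDomainType) (n : nat) (P : finType)
  (pref : P -> rel 'I_n) (v : 'I_n -> P -> R) (A : P -> 'I_n) : Prop :=
  forall p q : P, ~ justified_envy pref v A p q.

(* Four players, with team 0 the common favourite.  Team 0 values the
   players 10, 9, 8, 7 and team 1 values them 1, 1, 0, 0.  Justified envy
   freeness forces team 0 to hold the players it values most, i.e. a prefix
   of 10, 9, 8, 7.  If that prefix contains 10 and 9, team 1 holds nothing
   of value to it while team 0 holds 2, so team 1 envies beyond one item.
   Otherwise team 1 holds 9 or 10 together with 8 and 7, worth at least 24
   to team 0, which holds at most 10: team 0 envies beyond one item. *)

From mathcomp Require Import all_boot all_order all_algebra.
From mathcomp Require Import lra zify.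
Import Order.TTheory GRing.Theory Num.Theory.
Set Implicit Arguments. Unset Strict Implicit. Unset Printing Implicit Defensive.
Local Open Scope ring_scope.

Section FavouriteTeam.
Variables (n : nat) (P : finType) (t : 'I_n).

Definition favourite_pref (p : P) : rel 'I_n := fun i j => (j == t) ==> (i == t).

Lemma favourite_weak_pref : weak_pref favourite_pref.
Proof.
move=> p; split=> [i j | j i k]; rewrite /favourite_pref.
  by case: (i == t); case: (j == t).
by case: (i == t); case: (j == t); case: (k == t).
Qed.

Lemma favourite_strict_pref p i : i != t -> strict_pref favourite_pref p t i.
Proof. by rewrite /strict_pref /favourite_pref eqxx implybT => /negbTE ->. Qed.

Lemma justified_EF_favourite_le (R : realDomainType) (pref : P -> rel 'I_n)
    (v : 'I_n -> P -> R) (A : P -> 'I_n) p q :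
  (forall p i, i != t -> strict_pref pref p t i) -> justified_EF pref v A ->
  A q = t -> A p != t -> v t p <= v t q.
Proof.
move=> favourite jEF Aq Ap; rewrite leNgt; apply/negP => lt_qp.
by apply: (jEF p q); split; rewrite Aq //; apply: favourite.
Qed.

End FavouriteTeam.

Section EF1Bound.
Variables (R : numDomainType) (n : nat) (P : finType) (v : 'I_n -> P -> R).
Hypothesis v_ge0 : nonneg_values v.

Lemma valuation_setD_le i (S X : {set P}) :
  valuation v i (S :\: X) <= valuation v i S.
Proof.
rewrite /valuation [leRHS](big_setID X) /= lerDr.
exact: sumr_ge0.
Qed.

Lemma valuation_card_le1 i (M : R) (S : {set P}) :
  0 <= M -> (forall p, v i p <= M) -> (#|S| <= 1)%N -> valuation v i S <= M.
Proof.
move=> M_ge0 vM cardS; apply: le_trans (ler_sum _ (fun p _ => vM p)) _.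
by rewrite sumr_const; case: #|S| cardS => [|[]] // _; rewrite ?mulr0n ?mulr1n.
Qed.

Lemma EF1_envy_bound (A : P -> 'I_n) i j (M : R) :
  EF1 v A -> i != j -> 0 <= M -> (forall p, v i p <= M) ->
  valuation v i (bundle A j) <= valuation v i (bundle A i) + M.
Proof.
move=> ef1 ij M_ge0 vM; have [X [Y [_ _ cardXY envy]]] := ef1 i j ij.
have removed_le : valuation v i (bundle A j :&: Y) <= M.
  apply: valuation_card_le1 => //; apply: leq_trans cardXY.
  by apply/subset_leq_card/(subset_trans (subsetIr _ _))/subsetUr.
rewrite /valuation (big_setID Y) /= -/(valuation _ _ _) -/(valuation _ _ _).
rewrite addrC lerD //; apply: le_trans envy _; exact: valuation_setD_le.
Qed.

End EF1Bound.

Lemma ord2_cases (i : 'I_2) : i = ord0 \/ i = ord_max.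
Proof. by case: i => [[|[|//]] ?]; [left | right]; apply: val_inj. Qed.

Definition p0 : 'I_4 := @Ordinal 4 0 isT.
Definition p1 : 'I_4 := @Ordinal 4 1 isT.
Definition p2 : 'I_4 := @Ordinal 4 2 isT.
Definition p3 : 'I_4 := @Ordinal 4 3 isT.

Lemma valuation_bundle_ord4 (R : numDomainType) n (v : 'I_n -> 'I_4 -> R)
    (A : 'I_4 -> 'I_n) i j :
  valuation v i (bundle A j) =
  (if A p0 == j then v i p0 else 0) + (if A p1 == j then v i p1 else 0) +
  (if A p2 == j then v i p2 else 0) + (if A p3 == j then v i p3 else 0).
Proof.
rewrite /valuation big_mkcond /= !big_ord_recl big_ord0 addr0 !addrA /bundle !inE.
by congr (_ + _ + _ + _); congr (if A _ == j then v i _ else 0); apply: val_inj.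
Qed.

Section Example.
Variable R : realFieldType.

Definition example_value (i : 'I_2) (p : 'I_4) : R :=
  if i == ord0 then (10 - p)%:R else (p < 2)%:R.

Lemma example_value_ge0 : nonneg_values example_value.
Proof. by move=> i p; rewrite /example_value; case: ifP. Qed.

Lemma justified_EF_example_low (A : 'I_4 -> 'I_2) p :
  justified_EF (favourite_pref ord0) example_value A ->
  A p = ord_max -> (p < 2)%N -> A p2 = ord_max /\ A p3 = ord_max.
Proof.
move=> jEF Ap lt_p2; have Ap' : A p != ord0 by rewrite Ap.
have low (q : 'I_4) : (2 <= q)%N -> A q = ord_max.
  move=> le2q; case: (ord2_cases (A q)) => // Aq.
  have := justified_EF_favourite_le (@favourite_strict_pref _ _ _) jEF Aq Ap'.
  rewrite /example_value /= ler_nat.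
  by case: p q lt_p2 le2q {Ap Ap' Aq} => [p ?] [q ?] /=; lia.
by split; apply: low.
Qed.

Lemma example_not_EF1_justified_EF (A : 'I_4 -> 'I_2) :
  ~ (EF1 example_value A /\ justified_EF (favourite_pref ord0) example_value A).
Proof.
move=> [ef1 jEF].
have value0_le p : example_value ord0 p <= 10.
  by rewrite /example_value /= ler_nat leq_subr.
have value1_le p : example_value ord_max p <= 1.
  by rewrite /example_value /= lern1 leq_b1.
have envy0 := EF1_envy_bound example_value_ge0 ef1
  (isT : ord0 != ord_max :> 'I_2) (ler0n _ 10) value0_le.
have envy1 := EF1_envy_bound example_value_ge0 ef1
  (isT : ord_max != ord0 :> 'I_2) ler01 value1_le.
case: (ord2_cases (A p0)) => a0; case: (ord2_cases (A p1)) => a1.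
- move: envy1; rewrite !valuation_bundle_ord4 a0 a1 /example_value /= !if_same.
  lra.
all: have [a2 a3] : A p2 = ord_max /\ A p3 = ord_max
  by [apply: (justified_EF_example_low jEF a0) | apply: (justified_EF_example_low jEF a1)].
all: move: envy0; rewrite !valuation_bundle_ord4 a0 a1 a2 a3 /example_value /= !subnE /=.
all: lra.
Qed.

End Example.

Theorem proposition6 (R : realFieldType) :
  exists (P : finType) (pref : P -> rel 'I_2) (v : 'I_2 -> P -> R),
    [/\ weak_pref pref, nonneg_values v,
        (exists t : 'I_2, forall (p : P) (i : 'I_2), i != t -> strict_pref pref p t i) &
        forall A : P -> 'I_2, ~ (EF1 v A /\ justified_EF pref v A)].
Proof.
exists ('I_4 : finType), (favourite_pref ord0), (@example_value R); split.
- exact: favourite_weak_pref.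
- exact: example_value_ge0.
- by exists ord0; apply: favourite_strict_pref.
- exact: example_not_EF1_justified_EF.
Qed.
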